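(* For all graphs $G$ and $H$: if $G$ and $H$ are distinguishable by EB-1WL, then there exist $d\ge1$, $t\ge1$ and a $d$-dimensional EB-GNN $\mathcal{T}$ with $t$ layers such that $\mathcal{T}(G)\neq\mathcal{T}(H)$.
   Context: All graphs are finite, simple and undirected, without isolated vertices; $N(v)$ denotes the neighborhood of $v$. An ordered edge of $G=(V,E)$ is a pair $(u,v)$ with $\{u,v\}\in E$. EB-1WL coloring: $\mathrm{eb}^{(0)}(G,(u,v))=1$ for every ordered edge, and $\mathrm{eb}^{(\ell+1)}(G,(u,v)) = \big(\mathrm{eb}^{(\ell)}(G,(u,v)),\ \{\!\{\mathrm{eb}^{(\ell)}(G,(u,x)) : x\in N(u)\}\!\},\ \{\!\{(\mathrm{eb}^{(\ell)}(G,(u,y)),\mathrm{eb}^{(\ell)}(G,(v,y))) : y\in N(u)\cap N(v)\}\!\},\ \{\!\{\mathrm{eb}^{(\ell)}(G,(v,z)) : z\in N(v)\}\!\}\big)$. $\mathrm{eb}^{(\ell)}(G)$ is the multiset of $\mathrm{eb}^{(\ell)}(G,(u,v))$ over all ordered edges. Graphs are distinguishable by EB-1WL if they have different numbers of vertices or there is $\ell$ with $\mathrm{eb}^{(\ell)}(G)\neq\mathrm{eb}^{(\ell)}(H)$. EB-GNN: a $d$-dimensional EB-GNN $\mathcal{T}$ with $t$ layers is given by real parameters $a_i,b_i,c_i,u_i,v_i\in\mathbb{R}^d$, $A_i,C_i,U_i,V_i\in\mathbb{R}^{d\times d}$, $B_i\in\mathbb{R}^{d\times 2d}$ for $i=1,\dots,t$.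 On $G$ it computes for every ordered edge $(u,v)$: $f^{(0)}(u,v)=(1,0,\dots,0)^T\in\mathbb{R}^d$, and for $1\le i\le t$: $\alpha^{(i)}(u)=\sum_{x\in N(u)}\mathrm{ReLU}(A_if^{(i-1)}(u,x)+a_i)$, $\beta^{(i)}(u,v)=\sum_{y\in N(u)\cap N(v)}\mathrm{ReLU}\big(B_i\binom{f^{(i-1)}(u,y)}{f^{(i-1)}(v,y)}+b_i\big)$, $\gamma^{(i)}(v)=\sum_{z\in N(v)}\mathrm{ReLU}(C_if^{(i-1)}(v,z)+c_i)$, $g^{(i)}(u,v)=f^{(i-1)}(u,v)+\alpha^{(i)}(u)+\beta^{(i)}(u,v)+\gamma^{(i)}(v)$, $f^{(i)}(u,v)=g^{(i)}(u,v)+V_i\,\mathrm{ReLU}(U_ig^{(i)}(u,v)+u_i)+v_i$, where $\mathrm{ReLU}(x)=\max\{0,x\}$ coordinatewise. The output is $\mathcal{T}(G)=\sum_{(u,v):\{u,v\}\in E}f^{(t)}(u,v)$ (sum over ordered edges). *)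

From HB Require Import structures.
From mathcomp Require Import all_boot all_order all_algebra.
From mathcomp Require Import finmap multiset.
From mathcomp Require Import reals Rstruct.
Set Implicit Arguments. Unset Strict Implicit. Unset Printing Implicit Defensive.

Definition graph_ok (V : finType) (e : rel V) : Prop :=
  symmetric e /\ irreflexive e /\ (forall v : V, exists x, e v x).

(* Multisets are
   finmap's {mset _}, so equality of colours is literally equality of these
   tuples with multiset equality. *)
Local Open Scope mset_scope.
Fixpoint colT (n : nat) : choiceType :=
  match n with
  | 0 => unit
  | n.+1 => (colT n * {mset colT n} * {mset (colT n * colT n)%type}
             * {mset colT n})%type
  end.

(* eb l u v : the colour eb^(l)(G,(u,v)); only meaningful for ordered edges
   (u,v) with e u v, and only ever consulted on such pairs. *)
Fixpoint eb (V : finType) (e : rel V) (l : nat) : V -> V -> colT l :=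
  match l return V -> V -> colT l with
  | 0 => fun _ _ => tt
  | l.+1 => fun u v =>
      let c := eb e l in
      (c u v,
       seq_mset [seq c u x | x <- enum V & e u x],
       seq_mset [seq (c u y, c v y) | y <- enum V & e u y && e v y],
       seq_mset [seq c v z | z <- enum V & e v z])
  end.

Definition eb_graph (V : finType) (e : rel V) (l : nat) : {mset colT l} :=
  seq_mset [seq eb e l p.1 p.2 | p <- enum [pred p : V * V | e p.1 p.2]].

Definition eb_distinguishable (VG : finType) (eG : rel VG)
    (VH : finType) (eH : rel VH) : Prop :=
  #|VG| <> #|VH| \/ exists l : nat, eb_graph eG l <> eb_graph eH l.

Local Close Scope mset_scope.
Local Open Scope ring_scope.
Notation R := Rdefinitions.R.

Record layer (d : nat) := Layer {
  la : 'cV[R]_d; lb : 'cV[R]_d; lc : 'cV[R]_d; lu : 'cV[R]_d; lv : 'cV[R]_d;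
  mA : 'M[R]_d; mB : 'M[R]_(d, d + d); mC : 'M[R]_d; mU : 'M[R]_d; mV : 'M[R]_d
}.

Definition relu (d : nat) (x : 'cV[R]_d) : 'cV[R]_d :=
  map_mx (fun r : R => Num.max r 0) x.

Definition f0 (V : finType) (d : nat) : V -> V -> 'cV[R]_d :=
  fun _ _ => \col_(i < d) (if val i == 0%N then 1 else 0).

Definition layer_step (V : finType) (e : rel V) (d : nat) (L : layer d)
    (f : V -> V -> 'cV[R]_d) : V -> V -> 'cV[R]_d :=
  fun u v =>
    let alpha := \sum_(x : V | e u x) relu (mA L *m f u x + la L) in
    let beta  := \sum_(y : V | e u y && e v y)
                    relu (mB L *m col_mx (f u y) (f v y) + lb L) in
    let gamma := \sum_(z : V | e v z) relu (mC L *m f v z + lc L) in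
    let g := f u v + alpha + beta + gamma in
    g + mV L *m relu (mU L *m g + lu L) + lv L.

Definition gnn_f (V : finType) (e : rel V) (d : nat) (net : seq (layer d)) :
    V -> V -> 'cV[R]_d :=
  foldl (fun f L => layer_step e L f) (@f0 V d) net.

Definition gnn_out (V : finType) (e : rel V) (d : nat) (net : seq (layer d)) :
    'cV[R]_d :=
  \sum_(u : V) \sum_(v : V | e u v) gnn_f e net u v.

From HB Require Import structures.
From mathcomp Require Import all_boot all_order all_algebra.
From mathcomp Require Import finmap multiset.
From mathcomp Require Import reals Rstruct.
From mathcomp Require Import ring lra zify.
Set Implicit Arguments. Unset Strict Implicit. Unset Printing Implicit Defensive.
Import Order.TTheory GRing.Theory Num.Theory.
Local Open Scope mset_scope.
Local Open Scope ring_scope.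

(* By induction on the level [l] we build an EB-GNN whose feature [f^(l)(u,v)]
   is a function [F] of the colour [eb^(l)(G,(u,v))], the same for [G] and [H],
   and injective on the finitely many colours occurring in either graph: a
   block of coordinates holds the one-hot code of the colour.  The aggregation
   of the next layer writes the code counts of the three multisets (pairs are
   detected by [ReLU(x + y - 1)]), which determine the next colour; the MLP then
   projects these vectors injectively to reals, [x |-> sum_q x_q M^q] for [M]
   off the roots of a polynomial, and turns the projection into a new one-hot
   code with tent functions made of three ReLUs.  Summing over the edges, the
   block-[l] coordinates of [T(G)] count the edges of each colour, so they
   recover [eb^(l)(G)].  A difference in the number of vertices is already seen
   at level [1], since [sum_(u,v) 1 / deg u = |V|]. *)

Section Entries.
Variable d : nat.
Implicit Types (x y : 'cV[R]_d) (n : nat).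

(* Coordinates are indexed by [nat], with junk value [0] from [d] on, so that
   blocks of coordinates can be addressed by arithmetic on offsets. *)
Definition entry x n : R := \sum_(q < d | val q == n) x q 0.

Lemma entry_ord x (q : 'I_d) : entry x q = x q 0.
Proof.
rewrite /entry (bigD1 q) //= big1 ?addr0 // => j /andP[jq j_ne_q].
by move: j_ne_q; rewrite -(inj_eq val_inj) jq.
Qed.

Lemma entry_oob x n : (d <= n)%N -> entry x n = 0.
Proof.
move=> d_le_n; rewrite /entry big1 // => j /eqP jn.
by move: (ltn_ord j); rewrite jn ltnNge d_le_n.
Qed.

Lemma entry_lt x n (n_lt_d : (n < d)%N) : entry x n = x (Ordinal n_lt_d) 0.
Proof. by rewrite -entry_ord. Qed.

Lemma entry_inj x y : (forall n, (n < d)%N -> entry x n = entry y n) -> x = y.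
Proof. by move=> exy; apply/matrixP => q j; rewrite (ord1 j) -!entry_ord exy. Qed.

Lemma entryD x y n : entry (x + y) n = entry x n + entry y n.
Proof. by rewrite /entry -big_split; apply: eq_bigr => q _; rewrite mxE. Qed.

Lemma entry0 n : entry 0 n = 0.
Proof. by rewrite /entry big1 // => q _; rewrite mxE. Qed.

Lemma entry_sum (I : Type) (r : seq I) (P : pred I) (F : I -> 'cV[R]_d) n :
  entry (\sum_(i <- r | P i) F i) n = \sum_(i <- r | P i) entry (F i) n.
Proof. by elim/big_rec2: _ => [|i y1 y2 _ <-]; rewrite ?entry0 ?entryD. Qed.

Lemma entry_relu x n : entry (relu x) n = Num.max (entry x n) 0.
Proof.
have [n_lt_d|d_le_n] := ltnP n d; last by rewrite !entry_oob // maxxx.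
by rewrite !(entry_lt _ n_lt_d) mxE.
Qed.

Definition mx_nat (a : nat -> nat -> R) : 'M[R]_d := \matrix_(p, q) a p q.
Definition cv_nat (b : nat -> R) : 'cV[R]_d := \col_p b p.

Lemma entry_cv_nat b n : (n < d)%N -> entry (cv_nat b) n = b n.
Proof. by move=> n_lt_d; rewrite (entry_lt _ n_lt_d) mxE. Qed.

Lemma entry_mul_mx_nat a x n : (n < d)%N ->
  entry (mx_nat a *m x) n = \sum_(q < d) a n q * entry x q.
Proof.
by move=> n_lt_d; rewrite (entry_lt _ n_lt_d) mxE; apply: eq_bigr => q _; rewrite mxE entry_ord.
Qed.

Lemma sum_ord_select (y : nat -> R) m :
  \sum_(q < d) (if val q == m then y q else 0) = if (m < d)%N then y m else 0.
Proof.
have [m_lt_d|d_le_m] := ltnP m d.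
  rewrite (bigD1 (Ordinal m_lt_d)) //= eqxx big1 ?addr0 // => j j_ne.
  by case: eqP => // jm; case/eqP: j_ne; apply: val_inj.
by rewrite big1 // => j _; case: eqP => // jm; move: (ltn_ord j); rewrite jm ltnNge d_le_m.
Qed.

Lemma entry_mul_select (s : nat -> R) (g : nat -> nat) x n : (n < d)%N ->
  entry (mx_nat (fun p q => if q == g p then s p else 0) *m x) n = s n * entry x (g n).
Proof.
move=> n_lt_d; rewrite entry_mul_mx_nat //.
transitivity (\sum_(q < d) (if val q == g n then s n * entry x q else 0)).
  by apply: eq_bigr => q _; case: eqP; rewrite ?mul0r.
rewrite (sum_ord_select (fun q => s n * entry x q)).
by case: ltnP => // d_le; rewrite entry_oob ?mulr0.
Qed.

End Entries.

Lemma sum_seq_mset_map (V : finType) (T : choiceType) (P : pred V) (h : V -> T)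
    (M : nmodType) (phi : T -> M) :
  \sum_(x : V | P x) phi (h x) = \sum_(a <- seq_mset [seq h x | x <- enum V & P x]) phi a.
Proof.
by rewrite (perm_big _ (perm_eq_seq_mset _)) big_map big_filter big_enum_cond.
Qed.

Section LayerOnColors.
Variables (d : nat) (L : layer d) (i : nat) (F : colT i -> 'cV[R]_d).

Definition color_agg (x : colT i.+1) : 'cV[R]_d :=
  F x.1.1.1 + \sum_(k <- enum_mset x.1.1.2) relu (mA L *m F k + la L)
   + \sum_(p <- enum_mset x.1.2) relu (mB L *m col_mx (F p.1) (F p.2) + lb L)
   + \sum_(k <- enum_mset x.2) relu (mC L *m F k + lc L).

Definition color_layer (x : colT i.+1) : 'cV[R]_d :=
  let g := color_agg x in g + mV L *m relu (mU L *m g + lu L) + lv L.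

Lemma layer_step_color (V : finType) (e : rel V) (f : V -> V -> 'cV[R]_d) :
  (forall u v, e u v -> f u v = F (eb e i u v)) ->
  forall u v, e u v -> layer_step e L f u v = color_layer (eb e i.+1 u v).
Proof.
move=> fF u v euv; rewrite /layer_step /color_layer /color_agg /= (fF _ _ euv).
rewrite (eq_bigr (fun x => relu (mA L *m F (eb e i u x) + la L))); last first.
  by move=> x eux; rewrite fF.
rewrite (eq_bigr (fun y => relu (mB L *m col_mx (F (eb e i u y)) (F (eb e i v y)) + lb L))
  (P := fun y => e u y && e v y)); last by move=> y /andP[euy evy]; rewrite !fF.
rewrite (eq_bigr (fun z => relu (mC L *m F (eb e i v z) + lc L)) (P := e v)); last first.
  by move=> z evz; rewrite fF.
rewrite (sum_seq_mset_map (e u) (eb e i u) (fun k => relu (mA L *m F k + la L))).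
rewrite (sum_seq_mset_map (fun y => e u y && e v y) (fun y => (eb e i u y, eb e i v y))
  (fun p => relu (mB L *m col_mx (F p.1) (F p.2) + lb L))).
by rewrite (sum_seq_mset_map (e v) (eb e i v) (fun k => relu (mC L *m F k + lc L))).
Qed.

End LayerOnColors.

Definition cv_horner (d : nat) (M : R) (x : 'cV[R]_d) : R :=
  \sum_(q < d) entry x q * M ^+ q.

(* [cv_horner M x] evaluates at [M] the polynomial with coefficients [x]; take
   [M] off the roots of the product of all pairwise differences. *)
Lemma exists_cv_horner_inj (d : nat) (S : seq 'cV[R]_d) :
  exists M : R, {in S &, injective (cv_horner M)}.
Proof.
pose pl (x : 'cV[R]_d) : {poly R} := \poly_(q < d) entry x q.
have pl_neq x y : x != y -> pl x - pl y != 0.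
  rewrite subr_eq0; apply: contra => /eqP plxy; apply/eqP/entry_inj => n n_lt_d.
  by move: (congr1 (fun p : {poly R} => p`_n) plxy); rewrite !coef_poly n_lt_d.
pose P := \prod_(xy <- [seq (x, y) | x <- S, y <- S] | xy.1 != xy.2) (pl xy.1 - pl xy.2).
have P_neq0 : P != 0.
  by rewrite prodf_seq_neq0; apply/allP => xy _; apply/implyP; apply: pl_neq.
pose cands := [seq (k%:R : R) | k <- iota 0 (size P)].
have : ~~ all (root P) cands.
  apply/negP => all_roots.
  suff cands_uniq : uniq cands.
    by move: (max_poly_roots P_neq0 all_roots cands_uniq); rewrite size_map size_iota ltnn.
  by rewrite map_inj_uniq ?iota_uniq // => a b /eqP; rewrite eqr_nat => /eqP.
case/allPn => M _ PM_neq0; exists M => x y xS yS hxy.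
apply/eqP/negPn/negP => x_neq_y; move: PM_neq0.
rewrite /root /P horner_prod prodf_seq_neq0 => /allP /(_ (x, y)).
rewrite allpairs_f // => /(_ isT) /implyP /(_ x_neq_y).
by rewrite hornerD hornerN !horner_poly -/(cv_horner M x) -/(cv_horner M y) hxy subrr eqxx.
Qed.

Lemma exists_pos_lower_bound (s : seq R) :
  {in s, forall r, 0 < r} -> exists2 del, 0 < del & {in s, forall r, del <= r}.
Proof.
elim: s => [|a s IH] s_pos; first by exists 1.
have [|del del_gt0 del_le] := IH; first by move=> r rs; apply: s_pos; rewrite inE rs orbT.
exists (Num.min a del); first by rewrite lt_min del_gt0 s_pos ?mem_head.
move=> r; rewrite inE => /predU1P[->|rs]; first by rewrite ge_min lexx.
by rewrite ge_min del_le ?orbT.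
Qed.

Lemma exists_separation (s : seq R) :
  exists2 del, 0 < del & {in s &, forall a b, a != b -> del <= `|a - b|}.
Proof.
pose dists := [seq `|xy.1 - xy.2| | xy <- [seq (a, b) | a <- s, b <- s] & xy.1 != xy.2].
have [|del del_gt0 del_le] := @exists_pos_lower_bound dists.
  by move=> r /mapP[xy]; rewrite mem_filter => /andP[xy_neq _] ->; rewrite normr_gt0 subr_eq0.
exists del => // a b a_s b_s a_neq_b; apply: del_le; apply/mapP; exists (a, b) => //.
by rewrite mem_filter a_neq_b allpairs_f.
Qed.

(* The tent of height [1] and half-width [del] centred at [0]. *)
Definition tent (del z : R) : R :=
  (Num.max (z + del) 0 - 2 * Num.max z 0 + Num.max (z - del) 0) / del.

Lemma tent0 del : 0 < del -> tent del 0 = 1.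
Proof.
move=> del_gt0; rewrite /tent add0r sub0r maxxx mulr0 subr0.
rewrite (max_idPl (ltW del_gt0)) (max_idPr _); last by rewrite oppr_le0 ltW.
by rewrite addr0 divff // gt_eqF.
Qed.

Lemma tent_far del z : 0 < del -> del <= `|z| -> tent del z = 0.
Proof.
move=> del_gt0 del_le; rewrite /tent; apply/eqP; rewrite mulf_eq0; apply/orP; left.
have [z_ge0|z_lt0] := boolP (0 <= z).
  move: del_le; rewrite ger0_norm // => del_le.
  have -> : Num.max z 0 = z by apply/max_idPl.
  have -> : Num.max (z + del) 0 = z + del by apply/max_idPl; lra.
  have -> : Num.max (z - del) 0 = z - del by apply/max_idPl; lra.
  by apply/eqP; ring.
move: z_lt0 del_le; rewrite -ltNge => z_lt0; rewrite ltr0_norm // => del_le.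
have -> : Num.max z 0 = 0 by apply/max_idPr/ltW.
have -> : Num.max (z + del) 0 = 0 by apply/max_idPr; lra.
have -> : Num.max (z - del) 0 = 0 by apply/max_idPr; lra.
by rewrite mulr0 subrr addr0.
Qed.

Lemma natr_sum_bool (T : Type) (s : seq T) (P : pred T) :
  \sum_(a <- s) (P a)%:R = (count P s)%:R :> R.
Proof. by elim: s => [|a s IH]; rewrite ?big_nil // big_cons IH natrD. Qed.

Lemma eq_mset_count_code (T : choiceType) (P : pred T) (code : T -> nat) (N : nat)
    (A B : {mset T}) :
  {in P &, injective code} -> (forall a, P a -> (code a < N)%N) ->
  {subset enum_mset A <= P} -> {subset enum_mset B <= P} ->
  (forall k, (k < N)%N -> count (fun a => code a == k) A = count (fun a => code a == k) B) ->
  A = B.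
Proof.
move=> code_inj code_lt AP BP count_eq; apply/msetP => x; rewrite -!count_mem_mset.
have [Px|notPx] := boolP (P x); last first.
  by rewrite !(count_memPn _) //; apply: contra notPx; [apply: BP|apply: AP].
have count_code Z : {subset enum_mset Z <= P} ->
    count_mem x Z = count (fun a => code a == code x) Z.
  move=> ZP; apply: eq_in_count => a aZ; apply/eqP/eqP => [->//|].
  by move/code_inj; apply => //; apply: ZP.
by rewrite (count_code _ AP) (count_code _ BP) count_eq ?code_lt.
Qed.

Lemma pair_code_eq (K a b m : nat) : (b < K)%N ->
  (a * K + b == m)%N = (a == m %/ K)%N && (b == m %% K)%N.
Proof.
move=> b_lt_K; have K_gt0 : (0 < K)%N by apply: leq_ltn_trans b_lt_K.
apply/eqP/andP => [<-|[/eqP -> /eqP ->]]; last by rewrite -divn_eq.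
by rewrite divnMDl // modnMDl divn_small ?addn0 ?modn_small.
Qed.

Lemma relu_natr_and (b1 b2 : bool) : Num.max ((b1%:R : R) + b2%:R - 1) 0 = (b1 && b2)%:R.
Proof.
case: b1; case: b2 => /=; rewrite ?addrK ?addr0 ?add0r ?subrr ?maxxx //.
- exact/max_idPl/ler01.
- by apply/max_idPr; rewrite oppr_le0 ler01.
Qed.

Lemma max_natr0 (n : nat) : Num.max (n%:R : R) 0 = n%:R.
Proof. exact/max_idPl/ler0n. Qed.

Definition edge_colors (V : finType) (e : rel V) (l : nat) : seq (colT l) :=
  [seq eb e l p.1 p.2 | p <- enum [pred p : V * V | e p.1 p.2]].

Lemma size_edge_colors (V : finType) (e : rel V) l :
  (size (edge_colors e l) <= #|V| * #|V|)%N.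
Proof. by rewrite size_map -cardE -card_prod; apply: max_card. Qed.

Lemma mem_edge_colors (V : finType) (e : rel V) l u v :
  e u v -> eb e l u v \in edge_colors e l.
Proof. by move=> euv; apply/mapP; exists (u, v); rewrite ?mem_enum. Qed.

Lemma mem_seq_mset (T : choiceType) (s : seq T) a :
  (a \in enum_mset (seq_mset s)) = (a \in s).
Proof. exact: perm_mem (perm_eq_seq_mset s) a. Qed.

Definition colors_within (l : nat) (C : seq (colT l)) (x : colT l.+1) : Prop :=
  [/\ x.1.1.1 \in C, {subset enum_mset x.1.1.2 <= C},
      (forall p, p \in enum_mset x.1.2 -> (p.1 \in C) && (p.2 \in C)) &
      {subset enum_mset x.2 <= C}].

Lemma eb_colors_within (V : finType) (e : rel V) l (C : seq (colT l)) :
  (forall u v, e u v -> eb e l u v \in C) ->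
  forall u v, e u v -> colors_within C (eb e l.+1 u v).
Proof.
move=> ebC u v euv; split=> /=; first exact: ebC.
- by move=> a; rewrite mem_seq_mset => /mapP[x]; rewrite mem_filter => /andP[eux _] ->; apply: ebC.
- move=> p; rewrite mem_seq_mset => /mapP[y]; rewrite mem_filter => /andP[/andP[euy evy] _] ->.
  by rewrite /= !ebC.
- by move=> a; rewrite mem_seq_mset => /mapP[z]; rewrite mem_filter => /andP[evz _] ->; apply: ebC.
Qed.

Section Palette.
Variables (VG : finType) (eG : rel VG) (VH : finType) (eH : rel VH).

Definition palette l := undup (edge_colors eG l ++ edge_colors eH l).

Definition code_bound := (#|VG| * #|VG| + #|VH| * #|VH|).+1.

Lemma size_palette l : (size (palette l) < code_bound)%N.
Proof.
rewrite ltnS; apply: leq_trans (size_undup _) _; rewrite size_cat.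
by apply: leq_add; apply: size_edge_colors.
Qed.

Lemma index_palette_lt l c : c \in palette l -> (index c (palette l) < code_bound)%N.
Proof. by move=> cC; rewrite (leq_trans _ (ltnW (size_palette l))) // index_mem. Qed.

Lemma mem_paletteG l u v : eG u v -> eb eG l u v \in palette l.
Proof. by move=> euv; rewrite mem_undup mem_cat mem_edge_colors. Qed.

Lemma mem_paletteH l u v : eH u v -> eb eH l u v \in palette l.
Proof. by move=> euv; rewrite mem_undup mem_cat mem_edge_colors ?orbT. Qed.

Lemma palette_colors_within l x : x \in palette l.+1 -> colors_within (palette l) x.
Proof.
rewrite mem_undup mem_cat => /orP[]/mapP[p]; rewrite mem_enum => ep ->.
  exact: eb_colors_within (@mem_paletteG l) _ _ ep.
exact: eb_colors_within (@mem_paletteH l) _ _ ep.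
Qed.

(* Block [l] of the feature vector occupies [[l * block_size, l.+1 * block_size)].
   Its first [code_bound] coordinates carry the one-hot code of the level-[l]
   colour; the next three groups, of sizes [code_bound], [code_bound] and
   [code_bound ^ 2], hold the code counts of the three multisets that make up
   this colour (alpha, gamma, then the pairs of beta). *)
Definition block_size := (3 * code_bound + code_bound * code_bound)%N.

Variable depth : nat.
Definition net_dim := (depth.+1 * block_size)%N.

Definition encodes l (net : seq (layer net_dim)) (F : colT l -> 'cV[R]_net_dim) : Prop :=
  [/\ forall u v, eG u v -> gnn_f eG net u v = F (eb eG l u v),
      forall u v, eH u v -> gnn_f eH net u v = F (eb eH l u v),
      forall c, c \in palette l -> forall k, (k < code_bound)%N ->
        entry (F c) (l * block_size + k) = (k == index c (palette l))%:R &
      forall c, c \in palette l -> forall n, (l.+1 * block_size <= n)%N ->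
        entry (F c) n = 0].

End Palette.

Definition within (lo len n : nat) : bool := (lo <= n < lo + len)%N.

Section NextLayer.
Variables (VG : finType) (eG : rel VG) (VH : finType) (eH : rel VH) (depth : nat).
Local Notation d := (net_dim VG VH depth).
Local Notation K := (code_bound VG VH).
Local Notation W := (block_size VG VH).
Local Notation C := (palette eG eH).
Variables (i : nat) (net : seq (layer d)) (F : colT i -> 'cV[R]_d).
Hypothesis i_lt_depth : (i < depth)%N.
Hypothesis encF : encodes eG eH net F.

Definition src_at := (i * W)%N.
Definition dst_at := (i.+1 * W)%N.
Definition alpha_at := (dst_at + K)%N.
Definition gamma_at := (dst_at + 2 * K)%N.
Definition beta_at := (dst_at + 3 * K)%N.

Definition alpha_mx := mx_nat d (fun p q =>
  if q == (p - alpha_at + src_at)%N then (within alpha_at K p)%:R else 0).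
Definition gamma_mx := mx_nat d (fun p q =>
  if q == (p - gamma_at + src_at)%N then (within gamma_at K p)%:R else 0).
Definition beta_fst := mx_nat d (fun p q =>
  if q == (src_at + (p - beta_at) %/ K)%N then (within beta_at (K * K) p)%:R else 0).
Definition beta_snd := mx_nat d (fun p q =>
  if q == (src_at + (p - beta_at) %% K)%N then (within beta_at (K * K) p)%:R else 0).
Definition beta_bias := cv_nat d (fun p => - (within beta_at (K * K) p)%:R).

Definition agg_layer : layer d :=
  Layer 0 beta_bias 0 0 0 alpha_mx (row_mx beta_fst beta_snd) gamma_mx 0 0.

Definition agg := color_agg agg_layer F.

Lemma K_gt0 : (0 < K)%N. Proof. by []. Qed.
Lemma block_sizeE : W = (3 * K + K * K)%N. Proof. by []. Qed.
Lemma dst_atE : dst_at = (src_at + W)%N. Proof. by rewrite /dst_at /src_at mulSn addnC. Qed.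
Lemma dst_block_le : (dst_at + W <= d)%N.
Proof. by rewrite /dst_at /net_dim addnC -mulSn leq_mul2r ltnS i_lt_depth orbT. Qed.

Lemma entry_agg (x : colT i.+1) n : (n < d)%N ->
  entry (agg x) n = entry (F x.1.1.1) n
   + \sum_(a <- enum_mset x.1.1.2)
       Num.max ((within alpha_at K n)%:R * entry (F a) (n - alpha_at + src_at)) 0
   + \sum_(p <- enum_mset x.1.2)
       Num.max ((within beta_at (K * K) n)%:R * entry (F p.1) (src_at + (n - beta_at) %/ K)
          + (within beta_at (K * K) n)%:R * entry (F p.2) (src_at + (n - beta_at) %% K)
          - (within beta_at (K * K) n)%:R) 0
   + \sum_(a <- enum_mset x.2)
       Num.max ((within gamma_at K n)%:R * entry (F a) (n - gamma_at + src_at)) 0.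
Proof.
move=> n_lt_d; rewrite /agg /color_agg !entryD !entry_sum /=.
congr (_ + _ + _ + _); apply: eq_bigr => a _;
  rewrite entry_relu entryD ?entry_mul_select ?entry0 ?addr0 //.
by rewrite mul_row_col !entryD !entry_mul_select // entry_cv_nat.
Qed.

Lemma entry_agg_outside x n : ~~ within alpha_at K n -> ~~ within gamma_at K n ->
  ~~ within beta_at (K * K) n -> entry (agg x) n = entry (F x.1.1.1) n.
Proof.
move=> /negbTE notA /negbTE notG /negbTE notB.
have [n_lt_d|d_le_n] := ltnP n d; last by rewrite !entry_oob.
rewrite entry_agg // notA notG notB !big1 ?addr0 // => *;
  by rewrite !mul0r ?addr0 ?subr0 maxxx.
Qed.

Lemma entry_own_high x : colors_within (C i) x ->
  forall n, (dst_at <= n)%N -> entry (F x.1.1.1) n = 0.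
Proof. by move=> [xC _ _ _] n n_ge; case: encF => _ _ _ high; apply: high. Qed.

Lemma entry_src_code a k : a \in C i -> (k < K)%N ->
  entry (F a) (src_at + k) = (k == index a (C i))%:R.
Proof. by move=> aC k_lt; case: encF => _ _ code _; rewrite code. Qed.

Lemma entry_agg_low x n : (n < dst_at + K)%N -> entry (agg x) n = entry (F x.1.1.1) n.
Proof. by move=> n_lt; apply: entry_agg_outside; rewrite /within /alpha_at /gamma_at /beta_at; lia. Qed.

Lemma entry_agg_high x n : colors_within (C i) x -> (dst_at + W <= n)%N -> entry (agg x) n = 0.
Proof.
move=> xC W_le; have := K_gt0; have := block_sizeE => WE K_gt0.
rewrite entry_agg_outside ?(entry_own_high xC) //; rewrite /within /alpha_at /gamma_at /beta_at; lia.
Qed.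

Lemma entry_agg_alpha x k : colors_within (C i) x -> (k < K)%N ->
  entry (agg x) (alpha_at + k) = (count (fun a => index a (C i) == k) (enum_mset x.1.1.2))%:R.
Proof.
move=> xC k_lt; have := dst_block_le; have := K_gt0; have := block_sizeE => WE K_gt0 le_d.
rewrite entry_agg ?entry_own_high //; try by rewrite /alpha_at; lia.
have -> : within alpha_at K (alpha_at + k) by rewrite /within; lia.
have -> : within beta_at (K * K) (alpha_at + k) = false by rewrite /within /beta_at /alpha_at; lia.
have -> : within gamma_at K (alpha_at + k) = false by rewrite /within /gamma_at /alpha_at; lia.
rewrite [in X in _ + X + _]big1 ?[in X in _ + X]big1 ?addr0 ?add0r -?natr_sum_bool; first last.
  1,2: by move=> *; rewrite !mul0r ?addr0 ?subr0 maxxx.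
case: xC => _ alphaC _ _; apply: eq_big_seq => a /alphaC aC.
by rewrite mul1r addKn addnC entry_src_code // max_natr0 eq_sym.
Qed.

Lemma entry_agg_gamma x k : colors_within (C i) x -> (k < K)%N ->
  entry (agg x) (gamma_at + k) = (count (fun a => index a (C i) == k) (enum_mset x.2))%:R.
Proof.
move=> xC k_lt; have := dst_block_le; have := K_gt0; have := block_sizeE => WE K_gt0 le_d.
rewrite entry_agg ?entry_own_high //; try by rewrite /gamma_at; lia.
have -> : within gamma_at K (gamma_at + k) by rewrite /within; lia.
have -> : within beta_at (K * K) (gamma_at + k) = false by rewrite /within /beta_at /gamma_at; lia.
have -> : within alpha_at K (gamma_at + k) = false by rewrite /within /gamma_at /alpha_at; lia.
rewrite [in X in X + _ + _]big1 ?[in X in _ + X + _]big1 ?addr0 ?add0r -?natr_sum_bool; first last.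
  1,2: by move=> *; rewrite !mul0r ?addr0 ?subr0 maxxx.
case: xC => _ _ _ gammaC; apply: eq_big_seq => a /gammaC aC.
by rewrite mul1r addKn addnC entry_src_code // max_natr0 eq_sym.
Qed.

Definition pair_code (p : colT i * colT i) := (index p.1 (C i) * K + index p.2 (C i))%N.

(* The pair unit reads [ReLU(x_a + x_b - 1)] on two one-hot codes: it fires
   exactly when both codes are the expected ones. *)
Lemma entry_agg_beta x m : colors_within (C i) x -> (m < K * K)%N ->
  entry (agg x) (beta_at + m) = (count (fun p => pair_code p == m) (enum_mset x.1.2))%:R.
Proof.
move=> xC m_lt; have := dst_block_le; have := K_gt0; have := block_sizeE => WE K_gt0 le_d.
rewrite entry_agg ?entry_own_high //; try by rewrite /beta_at; lia.
have -> : within beta_at (K * K) (beta_at + m) by rewrite /within; lia.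
have -> : within gamma_at K (beta_at + m) = false by rewrite /within /beta_at /gamma_at; lia.
have -> : within alpha_at K (beta_at + m) = false by rewrite /within /beta_at /alpha_at; lia.
rewrite [in X in X + _ + _]big1 ?[in X in _ + X]big1 ?addr0 ?add0r -?natr_sum_bool; first last.
  1,2: by move=> *; rewrite !mul0r ?addr0 ?subr0 maxxx.
case: xC => _ _ betaC _; apply: eq_big_seq => p /betaC /andP[p1C p2C].
have q_lt : (m %/ K < K)%N by rewrite ltn_divLR.
have r_lt : (m %% K < K)%N by rewrite ltn_mod.
rewrite !mul1r addKn !entry_src_code // relu_natr_and /pair_code pair_code_eq ?index_palette_lt //.
by rewrite (eq_sym (index p.1 _)) (eq_sym (index p.2 _)).
Qed.

Section AggInjective.
Variables x y : colT i.+1.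
Hypotheses (xC : colors_within (C i) x) (yC : colors_within (C i) y).
Hypothesis agg_xy : agg x = agg y.

Lemma agg_own_eq : x.1.1.1 = y.1.1.1.
Proof.
case: xC yC => x1C _ _ _ [y1C _ _ _].
have := congr1 (fun z => entry z (src_at + index x.1.1.1 (C i))%N) agg_xy.
have lt_K := index_palette_lt x1C.
rewrite !entry_agg_low; last 2 first.
- by rewrite dst_atE -addnA ltn_add2l; apply: ltn_addl.
- by rewrite dst_atE -addnA ltn_add2l; apply: ltn_addl.
rewrite !entry_src_code // eqxx; case: eqP => [/esym /(index_inj x.1.1.1 y1C x1C) //|_].
by move=> /eqP; rewrite oner_eq0.
Qed.

Lemma agg_alpha_eq : x.1.1.2 = y.1.1.2.
Proof.
case: xC yC => _ alphaxC _ _ [_ alphayC _ _].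
apply: (@eq_mset_count_code _ (mem (C i)) (index^~ (C i)) K) => //.
- exact: (index_inj x.1.1.1).
- exact: index_palette_lt.
- by move=> k k_lt; apply/eqP; rewrite -(eqr_nat R) -!entry_agg_alpha ?agg_xy.
Qed.

Lemma agg_gamma_eq : x.2 = y.2.
Proof.
case: xC yC => _ _ _ gammaxC [_ _ _ gammayC].
apply: (@eq_mset_count_code _ (mem (C i)) (index^~ (C i)) K) => //.
- exact: (index_inj x.1.1.1).
- exact: index_palette_lt.
- by move=> k k_lt; apply/eqP; rewrite -(eqr_nat R) -!entry_agg_gamma ?agg_xy.
Qed.

Lemma agg_beta_eq : x.1.2 = y.1.2.
Proof.
case: xC yC => _ _ betaxC _ [_ _ betayC _].
apply: (@eq_mset_count_code _ (fun p => (p.1 \in C i) && (p.2 \in C i)) pair_code (K * K)) => //.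
- move=> p q /andP[p1C p2C] /andP[q1C q2C] pq; have := K_gt0 => K_gt0.
  have := congr1 (divn^~ K) pq; have := congr1 (modn^~ K) pq; rewrite /pair_code /=.
  rewrite !modnMDl !divnMDl // !modn_small ?divn_small ?index_palette_lt // !addn0.
  move=> /(index_inj p.1 p2C q2C) p2q /(index_inj p.1 p1C q1C) p1q.
  by rewrite [p]surjective_pairing [q]surjective_pairing p1q p2q.
- move=> p /andP[p1C p2C]; have := index_palette_lt p1C; have := index_palette_lt p2C.
  rewrite /pair_code; nia.
- by move=> m m_lt; apply/eqP; rewrite -(eqr_nat R) -!entry_agg_beta ?agg_xy.
Qed.

End AggInjective.

Lemma agg_inj : {in C i.+1 &, injective agg}.
Proof.
move=> x y /palette_colors_within xC /palette_colors_within yC xy.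
move: (agg_own_eq xC yC xy) (agg_alpha_eq xC yC xy) (agg_beta_eq xC yC xy) (agg_gamma_eq xC yC xy).
by case: x {xC xy} => [[[? ?] ?] ?]; case: y {yC} => [[[? ?] ?] ?] /= -> -> -> ->.
Qed.

Variables (M del : R).
Hypothesis horner_inj : {in [seq agg c | c <- C i.+1] &, injective (cv_horner M)}.
Hypothesis del_gt0 : 0 < del.
Hypothesis del_sep : {in [seq cv_horner M (agg c) | c <- C i.+1] &,
  forall a b, a != b -> del <= `|a - b|}.

Definition score c := cv_horner M (agg c).
Definition target k := nth 0 [seq score c | c <- C i.+1] k.

(* Hidden units [k], [K + k] and [2K + k] compute [ReLU(score - target k + t)]
   for [t = del, 0, -del], which the output recombines into
   [tent del (score - target k)] at coordinate [dst_at + k]: the one-hot code. *)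
Definition hidden_offset (h : nat) : R :=
  if (h < K)%N then - target h + del
  else if (h < 2 * K)%N then - target (h - K)
  else if (h < 3 * K)%N then - target (h - 2 * K) - del else 0.
Definition hidden_mx := mx_nat d (fun h q => if (h < 3 * K)%N then M ^+ q else 0).
Definition hidden_bias := cv_nat d hidden_offset.

Definition code_slot n := within dst_at K n && (n - dst_at < size (C i.+1))%N.
Definition out_mx :=
  mx_nat d (fun n h => if h == (n - dst_at)%N then (code_slot n)%:R / del else 0)
  + mx_nat d (fun n h => if h == (K + (n - dst_at))%N then - 2 * (code_slot n)%:R / del else 0)
  + mx_nat d (fun n h => if h == (2 * K + (n - dst_at))%N then (code_slot n)%:R / del else 0).

(* Its aggregation parameters are those of [agg_layer], so that
   [color_agg next_layer F] is [agg] by conversion. *)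
Definition next_layer : layer d :=
  Layer 0 beta_bias 0 hidden_bias 0 alpha_mx (row_mx beta_fst beta_snd) gamma_mx hidden_mx out_mx.

Definition next_F := color_layer next_layer F.

Lemma entry_hidden g h : (h < 3 * K)%N ->
  entry (relu (hidden_mx *m g + hidden_bias)) h = Num.max (cv_horner M g + hidden_offset h) 0.
Proof.
move=> h_lt; have h_lt_d : (h < d)%N.
  by have := dst_block_le; have := block_sizeE; rewrite /dst_at; nia.
rewrite entry_relu entryD entry_mul_mx_nat // entry_cv_nat // h_lt.
by congr (Num.max (_ + _) _); apply: eq_bigr => q _; rewrite mulrC.
Qed.

Lemma entry_out g n : entry (out_mx *m relu (hidden_mx *m g + hidden_bias)) n =
  if code_slot n then tent del (cv_horner M g - target (n - dst_at)) else 0.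
Proof.
have := K_gt0; have := dst_block_le; have := block_sizeE => WE le_d K_gt0.
have [n_lt_d|d_le_n] := ltnP n d; last first.
  by rewrite entry_oob //; case: ifP => // /andP[/andP[_ n_lt] _]; lia.
rewrite !mulmxDl !entryD !entry_mul_select //.
case: ifP => [/andP[/andP[dst_le n_lt] _]|_]; last by rewrite !mulr0 !mul0r !addr0.
rewrite (_ : true%:R = 1 :> R) //.
set k := (n - dst_at)%N; have k_lt : (k < K)%N by rewrite /k; lia.
rewrite !entry_hidden; try lia.
rewrite /hidden_offset k_lt.
have -> : (K + k < K)%N = false by lia.
have -> : (K + k < 2 * K)%N by lia.
have -> : (2 * K + k < K)%N = false by lia.
have -> : (2 * K + k < 2 * K)%N = false by lia.
have -> : (2 * K + k < 3 * K)%N by lia.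
have -> : (K + k - K = k)%N by lia.
have -> : (2 * K + k - 2 * K = k)%N by lia.
rewrite /tent; set z := cv_horner M g - target k.
have -> : cv_horner M g + (- target k + del) = z + del by rewrite /z; ring.
have -> : cv_horner M g + (- target k - del) = z - del by rewrite /z; ring.
by field; apply: lt0r_neq0.
Qed.

Lemma entry_next_F x n : entry (next_F x) n =
  entry (agg x) n + (if code_slot n then tent del (score x - target (n - dst_at)) else 0).
Proof. by rewrite /next_F /color_layer /= !entryD entry_out entry0 addr0. Qed.

Lemma score_inj : {in C i.+1 &, injective score}.
Proof.
move=> x y xC yC /horner_inj xy; apply: agg_inj => //; apply: xy; exact: map_f.
Qed.

Lemma entry_next_code c k : c \in C i.+1 -> (k < K)%N ->
  entry (next_F c) (dst_at + k) = (k == index c (C i.+1))%:R.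
Proof.
move=> cC k_lt; have := K_gt0 => K_gt0.
rewrite entry_next_F entry_agg_low; last by lia.
rewrite (entry_own_high (palette_colors_within cC)) ?leq_addr // add0r /code_slot /within addKn.
have -> : (dst_at <= dst_at + k < dst_at + K)%N by lia.
have [->|k_neq] := eqVneq k (index c (C i.+1)).
  by rewrite index_mem cC /target (nth_map c) ?index_mem // nth_index // subrr tent0.
case: ltnP => //= k_lt_size.
set c' := nth c (C i.+1) k; have c'C : c' \in C i.+1 by apply: mem_nth.
have c_neq : c != c'.
  by apply: contra k_neq => /eqP ->; rewrite /c' index_uniq ?undup_uniq.
rewrite /target (nth_map c) // tent_far //; apply: del_sep; try exact: map_f.
by apply: contra c_neq => /eqP /score_inj ->.
Qed.

Lemma entry_next_high c n : c \in C i.+1 -> (i.+2 * W <= n)%N -> entry (next_F c) n = 0.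
Proof.
move=> cC n_ge; have n_ge' : (dst_at + W <= n)%N by rewrite /dst_at addnC -mulSn.
rewrite entry_next_F (entry_agg_high (palette_colors_within cC) n_ge') add0r /code_slot /within.
case: ifP => // /andP[/andP[_ n_lt] _]; exfalso; move: n_lt n_ge'; rewrite block_sizeE; lia.
Qed.

Lemma encodes_next : encodes eG eH (rcons net next_layer) next_F.
Proof.
case: encF => fG fH _ _; split.
- by move=> u v euv; rewrite /gnn_f foldl_rcons; apply: layer_step_color fG u v euv.
- by move=> u v euv; rewrite /gnn_f foldl_rcons; apply: layer_step_color fH u v euv.
- by move=> c cC k k_lt; rewrite -entry_next_code.
- by move=> c cC n n_ge; rewrite entry_next_high.
Qed.

End NextLayer.

Lemma encodes_nil (VG : finType) (eG : rel VG) (VH : finType) (eH : rel VH) depth :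
  encodes eG eH [::] (fun _ : colT 0 => \col_(q < net_dim VG VH depth) (if val q == 0%N then 1 else 0)).
Proof.
have block_pos : (block_size VG VH <= net_dim VG VH depth)%N by rewrite leq_pmull.
split=> // c cC; last first.
  move=> n; rewrite mul1n => W_le; have [n_lt_d|] := ltnP n (net_dim VG VH depth); last exact: entry_oob.
  by rewrite (entry_lt _ n_lt_d) mxE /=; case: eqP => // n0; move: W_le; rewrite n0.
move=> k k_lt; have k_lt_d : (k < net_dim VG VH depth)%N.
  by apply: leq_trans block_pos; rewrite /block_size; lia.
have -> : index c (palette eG eH 0) = 0%N by move: cC; case: (palette eG eH 0) => // a s _ /=; case: a; case: c.
by rewrite mul0n add0n (entry_lt _ k_lt_d) mxE /=; case: eqP.
Qed.

Lemma exists_encoding_net (VG : finType) (eG : rel VG) (VH : finType) (eH : rel VH) depth l :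
  (l <= depth)%N -> exists (net : seq (layer (net_dim VG VH depth)))
    (F : colT l -> 'cV[R]_(net_dim VG VH depth)), size net = l /\ encodes eG eH net F.
Proof.
elim: l => [_|l IH l_lt]; first by exists [::]; eexists; split; last exact: encodes_nil.
have [net [F [size_net encF]]] := IH (ltnW l_lt).
have [M horner_inj] := exists_cv_horner_inj [seq agg F c | c <- palette eG eH l.+1].
have [del del_gt0 del_sep] := exists_separation [seq cv_horner M (agg F c) | c <- palette eG eH l.+1].
exists (rcons net (next_layer eG eH F M del)), (next_F eG eH F M del); split.
  by rewrite size_rcons size_net.
exact: encodes_next.
Qed.

Lemma entry_gnn_out (V : finType) (e : rel V) d (net : seq (layer d)) l (F : colT l -> 'cV[R]_d) n :
  (forall u v, e u v -> gnn_f e net u v = F (eb e l u v)) ->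
  entry (gnn_out e net) n = \sum_(c <- edge_colors e l) entry (F c) n.
Proof.
move=> fF; rewrite /gnn_out entry_sum.
rewrite (eq_bigr (fun u => \sum_(v | e u v) entry (F (eb e l u v)) n)); last first.
  by move=> u _; rewrite entry_sum; apply: eq_bigr => v euv; rewrite fF.
by rewrite pair_big_dep /edge_colors big_map big_enum.
Qed.

Lemma encodes_gnn_out_inj (VG : finType) (eG : rel VG) (VH : finType) (eH : rel VH) depth l
    (net : seq (layer (net_dim VG VH depth))) (F : colT l -> 'cV[R]_(net_dim VG VH depth)) :
  encodes eG eH net F -> gnn_out eG net = gnn_out eH net -> eb_graph eG l = eb_graph eH l.
Proof.
case=> fG fH code _ out_eq.
have count_out (V : finType) (e : rel V) k : (k < code_bound VG VH)%N ->
    (forall u v, e u v -> gnn_f e net u v = F (eb e l u v)) ->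
    {subset edge_colors e l <= palette eG eH l} ->
    entry (gnn_out e net) (l * block_size VG VH + k) =
    (count (fun c => index c (palette eG eH l) == k) (enum_mset (seq_mset (edge_colors e l))))%:R.
  move=> k_lt fF sub; have /permP -> := perm_eq_seq_mset (edge_colors e l).
  rewrite (entry_gnn_out _ fF).
  by rewrite -natr_sum_bool; apply: eq_big_seq => c /sub cC; rewrite code // eq_sym.
apply: (@eq_mset_count_code _ (mem (palette eG eH l)) (index^~ (palette eG eH l)) (code_bound VG VH)).
- by move=> c c' cC; apply: (index_inj c cC).
- exact: index_palette_lt.
- by move=> c; rewrite mem_seq_mset mem_undup mem_cat => ->.
- by move=> c; rewrite mem_seq_mset mem_undup mem_cat orbC => ->.
- move=> k k_lt; apply/eqP; rewrite -(eqr_nat R).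
  rewrite -(count_out _ _ _ k_lt fG) -?(count_out _ _ _ k_lt fH) ?out_eq //.
  + by move=> c; rewrite mem_undup mem_cat orbC => ->.
  + by move=> c; rewrite mem_undup mem_cat => ->.
Qed.

Lemma eb_graph_succ_inj (VG : finType) (eG : rel VG) (VH : finType) (eH : rel VH) l :
  eb_graph eG l.+1 = eb_graph eH l.+1 -> eb_graph eG l = eb_graph eH l.
Proof.
have own_colors (V : finType) (e : rel V) :
    edge_colors e l = [seq c.1.1.1 | c <- edge_colors e l.+1] by rewrite -map_comp.
move/eq_seq_msetP => perm_succ; apply/eq_seq_msetP.
change (perm_eq (edge_colors eG l) (edge_colors eH l)).
by rewrite (own_colors _ eG) (own_colors _ eH); apply: perm_map.
Qed.

(* Summing [1 / deg u] over the ordered edges [(u, v)] counts the vertices,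
   and [deg u] is the size of the first multiset of the level-1 colour. *)
Lemma sum_inv_degree (V : finType) (e : rel V) : graph_ok e ->
  \sum_(c <- edge_colors e 1) ((size (enum_mset c.1.1.2))%:R : R)^-1 = #|V|%:R.
Proof.
case=> _ [_ no_isolated].
rewrite /edge_colors big_map big_enum /=.
rewrite (eq_bigl (fun p : V * V => xpredT p.1 && e p.1 p.2)) // -(pair_big_dep xpredT e
  (fun u v => ((size (enum_mset (eb e 1 u v).1.1.2))%:R : R)^-1)) /=.
rewrite -sum1_card natr_sum; apply: eq_bigr => u _.
have [x eux] := no_isolated u.
have deg_gt0 : (0 < #|[pred x | e u x]|)%N by apply/card_gt0P; exists x.
rewrite (eq_bigr (fun _ => ((#|[pred x | e u x]|)%:R : R)^-1)); last first.
  move=> v _; rewrite /= (perm_size (perm_eq_seq_mset _)) size_map size_filter.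
  by rewrite -sum1_count big_enum_cond -sum1_card.
rewrite sumr_const (eq_card (B := [pred x | e u x])) // -[_ *+ _]mulr_natr mulVf //.
by rewrite pnatr_eq0 -lt0n.
Qed.

Lemma eb_graph1_card (VG : finType) (eG : rel VG) (VH : finType) (eH : rel VH) :
  graph_ok eG -> graph_ok eH -> eb_graph eG 1 = eb_graph eH 1 -> #|VG| = #|VH|.
Proof.
move=> okG okH /eq_seq_msetP perm_1; apply/eqP.
by rewrite -(eqr_nat R) -(sum_inv_degree okG) -(sum_inv_degree okH) (perm_big _ perm_1).
Qed.

Lemma eb_distinguishable_level (VG : finType) (eG : rel VG) (VH : finType) (eH : rel VH) :
  graph_ok eG -> graph_ok eH -> eb_distinguishable eG eH ->
  exists2 l, (0 < l)%N & eb_graph eG l <> eb_graph eH l.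
Proof.
move=> okG okH [card_neq|[[|l] neq]]; last by exists l.+1.
  by exists 1%N => // /(eb_graph1_card okG okH).
by exists 1%N => // /eb_graph_succ_inj.
Qed.

Theorem mainTheorem9 (VG : finType) (eG : rel VG) (VH : finType) (eH : rel VH) :
  graph_ok eG -> graph_ok eH ->
  eb_distinguishable eG eH ->
  exists (d t : nat) (net : seq (layer d)),
    (1 <= d)%N /\ (1 <= t)%N /\ size net = t /\ gnn_out eG net <> gnn_out eH net.
Proof.
move=> okG okH /(eb_distinguishable_level okG okH)[l l_gt0 eb_neq].
have [net [F [size_net encF]]] := exists_encoding_net eG eH (leqnn l).
exists (net_dim VG VH l), l, net; split; first by rewrite muln_gt0 addn_gt0 muln_gt0.
by do 2!split=> //; move/(encodes_gnn_out_inj encF).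
Qed.
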